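(* Let $\mathcal{D}$ be a DAG on vertex set $[p]$, let $\mathcal{V} \subseteq [p]$, and let $k \in \mathcal{V}$. If $R_{\mathcal{D}}(\mathcal{V}, k) > 0$, then $k \in \mathrm{Maximal}(\mathcal{D}, \mathcal{V})$, i.e. no (proper) descendant of $k$ in $\mathcal{D}$ lies in $\mathcal{V}$.
   Context: For a DAG $\mathcal{D}$ on $[p]$ and $i, j \in [p]$, $S \subseteq [p]\setminus\{i,j\}$, write $i \not\perp\!\!\!\perp_{\mathcal{D}} j \mid S$ if $i$ and $j$ are d-connected given $S$ in $\mathcal{D}$. For $\mathcal{V} \subseteq [p]$, the moral subgraph $\mathcal{M}_{\mathcal{V}}(\mathcal{D})$ is the undirected graph with vertex set $\mathcal{V}$ and edge set $\{ i - j : i \neq j \in \mathcal{V},\ i \not\perp\!\!\!\perp_{\mathcal{D}} j \mid \mathcal{V}\setminus\{i,j\}\}$. $\mathcal{G}[W]$ denotes the induced subgraph of an undirected graph $\mathcal{G}$ on $W$, and $\mathcal{V}\setminus k := \mathcal{V}\setminus\{k\}$. The removed edge set is $\mathcal{R}_{\mathcal{D}}(\mathcal{V}, k) = \mathcal{M}_{\mathcal{V}}(\mathcal{D})[\mathcal{V}\setminus k] \setminus \mathcal{M}_{\mathcal{V}\setminus k}(\mathcal{D})$ (edges of the induced subgraph of $\mathcal{M}_{\mathcal{V}}(\mathcal{D})$ on $\mathcal{V}\setminus k$ that are absent from $\mathcal{M}_{\mathcal{V}\setminus k}(\mathcal{D})$), and the removal score is $R_{\mathcal{D}}(\mathcal{V},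 k) = |\mathcal{R}_{\mathcal{D}}(\mathcal{V}, k)|$. With $\mathrm{de}_{\mathcal{D}}(v)$ the set of descendants of $v$ in $\mathcal{D}$ (nodes reachable from $v$ by a nonempty directed path, excluding $v$ itself), $\mathrm{Maximal}(\mathcal{D}, \mathcal{V}) := \{ v \in \mathcal{V} : \mathrm{de}_{\mathcal{D}}(v) \cap \mathcal{V} = \emptyset \}$. *)

From mathcomp Require Import all_boot.
From mathcomp Require Import boolp.
Set Implicit Arguments. Unset Strict Implicit. Unset Printing Implicit Defensive.

Section DAG.
Variable p : nat.
(* A directed graph on [p] = 'I_p : E u v means there is an arrow u -> v. *)
Variable E : rel 'I_p.

Definition desc (v w : 'I_p) : bool := [exists u, E v u && connect E u w].

Definition de (v : 'I_p) : {set 'I_p} := [set w | desc v w].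

Definition acyclic : Prop := forall v : 'I_p, ~~ desc v v.

Definition adj (u v : 'I_p) : bool := E u v || E v u.

(* i and j are d-connected given S: there is a (simple) path
   i = x_0 - x_1 - ... - x_m = j in the skeleton such that every collider
   x_n (x_{n-1} -> x_n <- x_{n+1}) is in S or has a descendant in S, and
   every non-collider internal vertex is not in S. *)
Definition dconnected (i j : 'I_p) (S : {set 'I_p}) : Prop :=
  exists s : seq 'I_p,
    let l := i :: rcons s j in
    [/\ path adj i (rcons s j), uniq l &
      forall n, 0 < n -> n < (size l).-1 ->
        let u := nth i l n.-1 in
        let v := nth i l n in
        let w := nth i l n.+1 in
        if E u v && E w v then (v \in S) || [exists t in S, desc v t]
        else v \notin S].

Definition moral_edge (V : {set 'I_p}) (i j : 'I_p) : bool :=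
  [&& i != j, i \in V, j \in V & `[< dconnected i j (V :\ i :\ j) >]].

Definition moral (V : {set 'I_p}) : {set {set 'I_p}} :=
  [set e : {set 'I_p} | [exists i, exists j, (e == [set i; j]) && moral_edge V i j]].

(* R_D(V,k): edges of M_V(D)[V \ k] absent from M_{V\k}(D) *)
Definition removed (V : {set 'I_p}) (k : 'I_p) : {set {set 'I_p}} :=
  [set e in moral V | (e \subset V :\ k) && (e \notin moral (V :\ k))].

Definition removal_score (V : {set 'I_p}) (k : 'I_p) : nat := #|removed V k|.

Definition Maximal (V : {set 'I_p}) : {set 'I_p} :=
  [set v in V | de v :&: V == set0].

End DAG.

From mathcomp Require Import all_boot boolp.
Set Implicit Arguments. Unset Strict Implicit. Unset Printing Implicit Defensive.

(* Contrapositive: if k has a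
   descendant t in V, a path d-connecting i, j <> k given S := V\{i,j} yields
   one given T := S\k.  On such a path take the LAST triple blocked given T:
   it is a collider c reaching k, and c with all its descendants avoids T.
   As c ->* k ->+ t, t is not in T, so t is i or j; by symmetry t = i.  Walk
   back from i to c along a directed path, stop at the first vertex z on the
   rest of the old path and continue along it to j: the new part is a directed
   chain avoiding T, hence open, and the old part after z was already open. *)

Section DSeparation.
Variables (p : nat) (E : rel 'I_p).

Definition open_at (S : {set 'I_p}) (u v w : 'I_p) : bool :=
  if E u v && E w v then (v \in S) || [exists t in S, desc E v t] else v \notin S.

Fixpoint open_path (S : {set 'I_p}) (l : seq 'I_p) : bool :=
  match l with
  | u :: ((v :: w :: _) as r) => open_at S u v w && open_path S r
  | _ => true
  end.

Lemma open_path_cons S x y l :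
  open_path S [:: x, y & l] =
  (if l is z :: _ then open_at S x y z else true) && open_path S (y :: l).
Proof. by case: l. Qed.

Lemma open_path_behead S x l : open_path S (x :: l) -> open_path S l.
Proof. by case: l => // y l; rewrite open_path_cons => /andP[]. Qed.

Lemma open_path_suffix S s t : open_path S (s ++ t) -> open_path S t.
Proof. by elim: s => //= x s IH /open_path_behead. Qed.

Lemma open_at_sym S u v w : open_at S u v w = open_at S w v u.
Proof. by rewrite /open_at andbC. Qed.

Lemma open_path_rcons S s a b c :
  open_path S (rcons (rcons (rcons s a) b) c) =
  open_path S (rcons (rcons s a) b) && open_at S a b c.
Proof.
elim: s => [|x s IH]; first by rewrite /= andbT.
case: s IH => [|y s] IH; first by rewrite /= !andbT.
rewrite !rcons_cons in IH *; rewrite open_path_cons IH [in RHS]open_path_cons andbA.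
by case: s {IH}.
Qed.

Lemma open_path_rev S l : open_path S (rev l) = open_path S l.
Proof.
elim: l => [|x [|y [|z l]] IH] //.
rewrite !rev_cons open_path_rcons -!rev_cons IH.
by rewrite [RHS]open_path_cons open_at_sym andbC.
Qed.

Lemma open_pathP S d l :
  reflect (forall n, 0 < n -> n < (size l).-1 ->
             open_at S (nth d l n.-1) (nth d l n) (nth d l n.+1))
          (open_path S l).
Proof.
elim: l => [|u [|v [|w r]] IH]; try by apply: ReflectT => -[|[|n]].
rewrite open_path_cons; apply: (iffP andP) => [[uvw /IH vr] [|[|n]] //|H].
  by move=> _ /(vr n.+1 erefl).
split; first exact: (H 1).
by apply/IH => -[|n] // _; apply: (H n.+2).
Qed.

Definition dconn (S : {set 'I_p}) (i j : 'I_p) : Prop :=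
  exists r, [/\ path (adj E) i r, uniq (i :: r), open_path S (i :: r),
                last i r = j & i != j].

Lemma dconnectedE S i j : dconnected E i j S <-> dconn S i j.
Proof.
split=> [[s [adj_s uniq_s open_s]] | [r [adj_r uniq_r /(open_pathP _ i) open_r]]].
  exists (rcons s j); split; rewrite ?last_rcons //; first exact/(open_pathP _ i).
  by apply: contraTneq uniq_s => ->; rewrite /= mem_rcons mem_head.
case/lastP: r adj_r uniq_r open_r => [|s y] adj_s uniq_s open_s.
  by move=> /= <-; rewrite eqxx.
by rewrite last_rcons => <- _; exists s.
Qed.

Lemma adj_sym : symmetric (adj E).
Proof. by move=> x y; rewrite /adj orbC. Qed.

Lemma dconn_sym S i j : dconn S i j -> dconn S j i.
Proof.
case=> r [adj_r uniq_r open_r last_r ij].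
case/lastP: r adj_r uniq_r open_r last_r => [|s y] adj_s uniq_s open_s.
  by move=> /= eji; rewrite eji eqxx in ij.
rewrite last_rcons => eyj; subst y.
have rev_ij : rev (i :: rcons s j) = j :: rcons (rev s) i by rewrite rev_cons rev_rcons.
exists (rcons (rev s) i); split; rewrite ?last_rcons -?rev_ij ?rev_uniq ?open_path_rev //.
- have := rev_path (adj E) i (rcons s j).
  rewrite last_rcons belast_rcons rev_cons => ->.
  by rewrite (eq_path (e' := adj E)) // => x y; apply: adj_sym.
- by rewrite eq_sym.
Qed.

Lemma last_closed_triple S T l : open_path S l ->
  open_path T l \/ exists pre u c w m,
    [/\ l = pre ++ [:: u, c, w & m], open_at S u c w, ~~ open_at T u c w
      & open_path T [:: c, w & m]].
Proof.
elim: l => [|u [|c [|w m]] IH]; try by left.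
rewrite !(open_path_cons S u) => /andP[open_S /IH [open_T|]].
  case open_uT: (open_at T u c w); first by left; rewrite open_path_cons open_uT.
  by right; exists [::], u, c, w, m; rewrite open_uT.
case=> pre [u' [c' [w' [m' [-> *]]]]].
by right; exists (u :: pre), u', c', w', m'.
Qed.

Lemma connect_desc x y : connect E x y = (x == y) || desc E x y.
Proof.
rewrite /desc; apply/idP/idP.
- case/connectP=> [[|z q] /= xq ->]; first by rewrite eqxx.
  move: xq => /andP[xz zq]; apply/orP; right; apply/existsP; exists z.
  by rewrite xz (path_connect zq) // mem_last.
- case/orP=> [/eqP<-//|/existsP[z /andP[xz zy]]].
  exact: connect_trans (connect1 xz) zy.
Qed.

Lemma closed_by_removal S k u c w :
  open_at S u c w -> ~~ open_at (S :\ k) u c w ->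
  connect E c k /\ (forall y, connect E c y -> y \notin S :\ k).
Proof.
rewrite /open_at; case: (_ && _); last first.
  by move=> cNS; rewrite negbK => /setD1P[_ cS]; rewrite cS in cNS.
rewrite negb_or => c_open /andP[cNT no_descT]; split.
  rewrite connect_desc; case/orP: c_open => [cS | /existsP[t /andP[tS ct]]].
    by move: cNT; rewrite in_setD1 cS andbT negbK => ->.
  case: (t =P k) => [<-|tk]; first by rewrite ct orbT.
  move/negP: no_descT; case; apply/existsP; exists t.
  by rewrite in_setD1 tS ct !andbT; apply/eqP.
move=> y; rewrite connect_desc => /orP[/eqP<-//|cy].
by apply: contra no_descT => yT; apply/existsP; exists y; rewrite yT.
Qed.

Lemma backward_chain (T : {set 'I_p}) c i :
  connect E c i -> (forall y, connect E c y -> y \notin T) ->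
  exists b, [/\ path (fun a a' => E a' a) i b, all [predC T] b,
                uniq (i :: b) & last i b = c].
Proof.
move=> /connectP[q0 q0_path i_last0] c_avoids.
case: (shortenP q0_path) i_last0 => {q0 q0_path} q q_path uniq_q _ i_last.
have rev_cq : rev (c :: q) = i :: rev (belast c q) by rewrite lastI rev_rcons -i_last.
exists (rev (belast c q)); split.
- by rewrite i_last rev_path.
- apply/allP => y; rewrite mem_rev => /mem_belast /(path_connect q_path).
  exact: c_avoids.
- by rewrite -rev_cq rev_uniq.
- by rewrite -[LHS]/(last i (i :: _)) -rev_cq rev_cons last_rcons.
Qed.

Hypothesis acyclicE : acyclic E.

Lemma no_two_cycle u v : E u v -> E v u -> False.
Proof.
move=> uv vu; case/negP: (acyclicE u).
by apply/existsP; exists v; rewrite uv connect1.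
Qed.

(* A backward directed chain avoiding T has no collider and no conditioned
   vertex, so prefixing it to a path open given T keeps the path open. *)
Lemma open_path_backward_cat (T : {set 'I_p}) x s t :
  path (fun a b => E b a) x s -> all [predC T] s -> open_path T (last x s :: t) ->
  open_path T (x :: s ++ t).
Proof.
elim: s x => [//|y s IH] x /andP[yx ys] /andP[yNT sNT] open_t.
rewrite cat_cons open_path_cons IH // andbT.
case: (s ++ t) => // z _; rewrite /open_at.
by case: ifP => // /andP[xy _]; case: (no_two_cycle xy yx).
Qed.

(* Splicing: follow the backward chain from i until it first meets the open
   path x :: s, then follow that path to its end. *)
Lemma splice (T : {set 'I_p}) i b x s :
  path (adj E) x s -> uniq (x :: s) -> open_path T (x :: s) -> i \notin x :: s ->
  path (fun a a' => E a' a) i b -> all [predC T] b -> uniq (i :: b) ->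
  last i b \in x :: s -> dconn T i (last x s).
Proof.
move=> adj_s uniq_s open_s iNs b_back b_avoids uniq_ib b_end.
have b_meets_s : has [in x :: s] b.
  apply/hasP; exists (last i b) => //.
  by move: (mem_last i b); rewrite in_cons => /orP[/eqP bi|//]; rewrite -bi b_end in iNs.
case: (split_find b_meets_s) b_back b_avoids uniq_ib => z b1 b2 z_s b1Ns {b_end}.
rewrite cat_path all_cat -cat_cons cat_uniq.
move=> /andP[b1_back _] /andP[b1_avoids _] /andP[uniq_ib1 _].
have [s1 [s2 s_split]] : exists s1 s2, x :: s = s1 ++ z :: s2.
  by case/splitPr: z_s => s1 s2; exists s1, s2.
have adj_s2 : path (adj E) z s2.
  by have : sorted (adj E) (x :: s) by []; rewrite s_split => /cat_sorted2[].
have /andP[zNs2 uniq_s2] : uniq (z :: s2).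
  by move: uniq_s; rewrite s_split cat_uniq => /and3P[].
have open_s2 : open_path T (z :: s2).
  by apply: (open_path_suffix (s := s1)); rewrite -s_split.
have last_s : last x s = last z s2.
  by rewrite -[last x s]/(last x (x :: s)) s_split last_cat.
have s2_s : {subset z :: s2 <= x :: s} by move=> y; rewrite s_split mem_cat orbC => ->.
exists (b1 ++ z :: s2); split.
- rewrite -cat_rcons cat_path last_rcons adj_s2 andbT.
  by apply: sub_path b1_back => a a' a'a; rewrite /adj a'a orbT.
- rewrite -cat_rcons -cat_cons cat_uniq uniq_ib1 /=.
  apply/andP; split => //; apply/hasPn => y y_s2.
  have y_s : y \in x :: s by apply: s2_s; rewrite in_cons y_s2 orbT.
  rewrite in_cons mem_rcons in_cons; apply/norP; split; [|apply/norP; split].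
  + by apply: contraNneq iNs => <-.
  + by apply: contraNneq zNs2 => <-.
  + by apply: contra b1Ns => y_b1; apply/hasP; exists y.
- by rewrite -cat_rcons; apply: open_path_backward_cat; rewrite ?last_rcons.
- by rewrite last_cat last_s.
- by apply: contraNneq iNs => ->; rewrite last_s s2_s // mem_last.
Qed.

Lemma dconn_setD1 S k i j t :
  desc E k t -> t \in i |: (S :\ k) -> dconn S i j -> dconn (S :\ k) i j.
Proof.
move=> k_t t_in [r [adj_r uniq_r open_r last_r ij]].
have [open_T|[pre [u [c [w [m [r_split open_S closed_T open_tail]]]]]]] :=
  last_closed_triple (S :\ k) open_r; first by exists r.
have [c_k c_avoids] := closed_by_removal open_S closed_T.
have c_t : connect E c t by rewrite (connect_trans c_k) // connect_desc k_t orbT.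
case/setU1P: t_in => [t_i|t_T]; last by case/negP: (c_avoids t c_t).
subst t; have [b [b_back b_avoids uniq_ib b_end]] := backward_chain c_t c_avoids.
have tail_r : {subset [:: c, w & m] <= r}.
  by case: pre r_split => [|a pre] [_ ->] // y y_in; rewrite mem_cat in_cons y_in !orbT.
have last_tail : last i r = last c (w :: m).
  by rewrite -[last i r]/(last i (i :: r)) r_split last_cat.
rewrite -last_r last_tail; apply: (splice (b := b)); rewrite ?b_end ?mem_head //.
- have : sorted (adj E) (i :: r) by [].
  by rewrite r_split -cat_rcons => /cat_sorted2[].
- by move: uniq_r; rewrite r_split -cat_rcons cat_uniq => /and3P[].
- by move: uniq_r => /andP[iNr _]; apply: contra iNr => /tail_r.
Qed.

Lemma moral_edge_setD1 (V : {set 'I_p}) k i j t :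
  desc E k t -> t \in V -> i != k -> j != k ->
  moral_edge E V i j -> moral_edge E (V :\ k) i j.
Proof.
move=> k_t tV ik jk /and4P[ij iV jV /asboolP dc_ij].
rewrite /moral_edge ij !in_setD1 ik iV jk jV /=; apply/asboolP.
have -> : V :\ k :\ i :\ j = V :\ i :\ j :\ k.
  by apply/setP => y; rewrite !in_setD1; do 3!case: eqP.
have tk : t != k.
  by apply: contraNneq (acyclicE k) => t_k; rewrite -[X in desc E k X]t_k.
move/dconnectedE: dc_ij => dc_ij; apply/dconnectedE.
case: (t =P j) => [t_j|tj].
  apply/dconn_sym/(dconn_setD1 k_t); last exact: dconn_sym.
  by rewrite t_j setU11.
by apply: (dconn_setD1 k_t) dc_ij; rewrite !inE tk tV; case: eqP; case: eqP.
Qed.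
End DSeparation.

Theorem proposition2 (p : nat) (E : rel 'I_p) (V : {set 'I_p}) (k : 'I_p) :
  acyclic E -> k \in V -> 0 < removal_score E V k -> k \in Maximal E V.
Proof.
move=> acyclicE kV score; rewrite inE kV /=.
apply/eqP/setP => t; rewrite !inE; apply/negbTE/andP => -[k_t tV].
move: score; rewrite card_gt0 => /set0Pn[e]; rewrite !inE => /and3P[e_moral e_sub /negP].
apply; case/existsP: e_moral => i /existsP[j /andP[/eqP e_ij ij_edge]].
move: e_sub; rewrite e_ij subUset !sub1set !in_setD1 => /andP[/andP[ik _] /andP[jk _]].
apply/existsP; exists i; apply/existsP; exists j.
by rewrite eqxx (moral_edge_setD1 acyclicE k_t tV).
Qed.
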